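(* There is a function $f$ such that for all integers $\ell,t,k\ge 1$ and every $\mathcal{O}_k$-free graph $G$ with no $K_{t,t}$ subgraph, the maximum number of pairwise vertex-disjoint cycles of length at most $\ell$ in $G$ is at most $f(\ell,t,k)$.
   Context: All graphs are finite and simple. Two vertex-disjoint subgraphs are independent if there is no edge between them. A graph $G$ is $\mathcal{O}_k$-free if it does not contain $k$ pairwise vertex-disjoint and pairwise independent cycles; equivalently, $G$ has no induced subgraph isomorphic to a disjoint union of $k$ cycles. *)

(* A finite simple graph is a symmetric irreflexive
   relation e on a finType T. *)
From mathcomp Require Import all_boot.
Set Implicit Arguments. Unset Strict Implicit. Unset Printing Implicit Defensive.

Section Graphs.
Variables (T : finType) (e : rel T).

Definition is_graph_cycle (s : seq T) : bool :=
  (3 <= size s) && uniq s && path.cycle e s.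

Definition no_edge_between (s1 s2 : seq T) : bool :=
  [forall x, [forall y, (x \in s1) ==> (y \in s2) ==> ~~ e x y]].

Definition disjoint_cycles (cs : seq (seq T)) : Prop :=
  all is_graph_cycle cs /\
  pairwise (fun s1 s2 : seq T => [disjoint s1 & s2]) cs.

Definition Ok_free (k : nat) : Prop :=
  ~ exists cs : seq (seq T),
      [/\ size cs = k, all is_graph_cycle cs &
          pairwise (fun s1 s2 : seq T =>
                      [disjoint s1 & s2] && no_edge_between s1 s2) cs].

Definition has_Ktt_subgraph (t : nat) : Prop :=
  exists A B : {set T},
    [/\ #|A| = t, #|B| = t, [disjoint A & B] &
        forall a b, a \in A -> b \in B -> e a b].

End Graphs.

(* Ramsey's theorem for pairs.  Colour a pair of cycles C, C' (C before C' in
   the family) by None if they are independent, and otherwise by the positions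
   (a, b) in C and C' of the ends of some edge between them; for cycles of
   length at most l this uses at most l * l + 1 colours.  A large enough family
   of disjoint cycles thus contains k + 2t cycles all of whose pairs have the
   same colour.  The colour None gives k disjoint independent cycles; a colour
   (a, b) makes the a-th vertices of the first t cycles adjacent to the b-th
   vertices of the next t cycles, which is a K_{t,t}. *)

From mathcomp Require Import all_boot zify.
Set Implicit Arguments. Unset Strict Implicit. Unset Printing Implicit Defensive.

Lemma count_mem_palette_le (T K : eqType) (f : T -> K) (pal : seq K) b (s : seq T) :
  {in pal, forall c, count (fun x => f x == c) s <= b} ->
  count (fun x => f x \in pal) s <= size pal * b.
Proof.
elim: pal => [|c pal IH] small; first by rewrite (eq_count (a2 := pred0)) ?count_pred0.
have -> : count (fun x => f x \in c :: pal) s =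
          count (predU (fun x => f x == c) (fun x => f x \in pal)) s.
  by apply: eq_count => x; rewrite /= inE.
have smallpal : {in pal, forall c', count (fun x => f x == c') s <= b}.
  by move=> c' c'pal; apply: small; rewrite inE c'pal orbT.
rewrite mulSn; apply: leq_trans (leq_add (small c (mem_head _ _)) (IH smallpal)).
by rewrite -count_predUI leq_addr.
Qed.

Lemma pigeonhole_count (T K : eqType) (f : T -> K) (pal : seq K) b (s : seq T) :
  {in s, forall x, f x \in pal} -> size pal * b < size s ->
  exists2 c, c \in pal & b < count (fun x => f x == c) s.
Proof.
move=> fpal sizes; apply/hasP/negPn/negP; rewrite -all_predC => /allP small.
have : count (fun x => f x \in pal) s <= size pal * b.
  by apply: count_mem_palette_le => c /small /=; rewrite -leqNgt.
by rewrite (eq_in_count (a2 := predT)) // count_predT leqNgt sizes.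
Qed.

(* One step of the greedy construction below keeps a head x and the largest
   colour class of the pairs (x, y) with y in the tail. *)
Fixpoint head_hom_bound (n r : nat) : nat :=
  if r is r'.+1 then n * head_hom_bound n r' + 1 else 0.

Definition ramsey_bound (n m : nat) : nat := head_hom_bound n (n * m).+1.

Section Ramsey.
Variables (T K : eqType) (col : T -> T -> K) (pal : seq K).

Lemma head_homogeneous_subseq r s :
  {in s &, forall x y, col x y \in pal} -> head_hom_bound (size pal) r < size s ->
  exists p : seq (T * K),
    [/\ size p = r, subseq (map fst p) s, all (fun a => a.2 \in pal) p &
        pairwise (fun a b => col a.1 b.1 == a.2) p].
Proof.
elim: r s => [|r IH] s colP sizes; first by exists [::]; rewrite sub0seq.
case: s colP sizes => [|x s] colP; first by rewrite ltn0.
rewrite /= addn1 ltnS => sizes.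
have colPx : {in s, forall y, col x y \in pal}.
  by move=> y ys; apply: colP; rewrite inE ?ys ?eqxx ?orbT.
have [c cpal cnt] := pigeonhole_count colPx sizes.
have colP' : {in filter (fun y => col x y == c) s &, forall y z, col y z \in pal}.
  by move=> y z; rewrite !mem_filter => /andP[_ ys] /andP[_ zs];
     apply: colP; rewrite inE ?ys ?zs orbT.
have [p [sizep subp palp homp]] := IH _ colP' ltac:(by rewrite size_filter).
exists ((x, c) :: p); split => /=.
- by rewrite sizep.
- by rewrite eqxx; apply: subseq_trans subp (filter_subseq _ _).
- by rewrite cpal palp.
- rewrite homp andbT; apply/allP => a /(map_f fst) /(mem_subseq subp).
  by rewrite mem_filter => /andP[].
Qed.

Lemma ramsey_subseq m s :
  {in s &, forall x y, col x y \in pal} -> ramsey_bound (size pal) m < size s ->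
  exists c q, [/\ subseq q s, size q = m & pairwise (fun x y => col x y == c) q].
Proof.
move=> colP sizes.
have [p [sizep subp palp homp]] := head_homogeneous_subseq colP sizes.
have [c _ cnt] := pigeonhole_count (f := snd) (fun a => allP palp a)
                                   (ltac:(by rewrite sizep) : size pal * m < size p).
set h := map fst (filter (fun a => a.2 == c) p).
exists c, (take m h); split.
- apply: subseq_trans (take_subseq _ _) _.
  exact: subseq_trans (map_subseq _ (filter_subseq _ _)) subp.
- by rewrite size_takel // size_map size_filter ltnW.
- apply: subseq_pairwise (take_subseq _ _) _; rewrite pairwise_map.
  apply: (sub_in_pairwise (P := fun a => a.2 == c)) (filter_all _ _)
         (pairwise_filter _ homp).
  by move=> a b /eqP <-.
Qed.

End Ramsey.

Section EdgePositions.
Variables (T : finType) (e : rel T).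

Definition edge_position (s1 s2 : seq T) : option (nat * nat) :=
  if [pick xy : T * T | [&& xy.1 \in s1, xy.2 \in s2 & e xy.1 xy.2]] is Some (x, y)
  then Some (index x s1, index y s2) else None.

Definition position_palette (l : nat) : seq (option (nat * nat)) :=
  None :: [seq Some (a, b) | a <- iota 0 l, b <- iota 0 l].

Lemma size_position_palette l : size (position_palette l) = (l * l).+1.
Proof. by rewrite /= size_allpairs size_iota. Qed.

Lemma edge_position_palette l s1 s2 :
  size s1 <= l -> size s2 <= l -> edge_position s1 s2 \in position_palette l.
Proof.
rewrite /edge_position; case: pickP => [[x y] /and3P[/= xs1 ys2 _]|_] sz1 sz2;
  last exact: mem_head.
rewrite inE; apply/orP; right; apply: allpairs_f; rewrite mem_iota add0n.
- by rewrite (leq_trans _ sz1) ?index_mem.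
- by rewrite (leq_trans _ sz2) ?index_mem.
Qed.

Lemma edge_position_none s1 s2 :
  edge_position s1 s2 = None -> no_edge_between e s1 s2.
Proof.
rewrite /edge_position; case: pickP => [[] //|noedge _].
apply/forallP => x; apply/forallP => y; apply/implyP => xs1; apply/implyP => ys2.
by have := noedge (x, y); rewrite /= xs1 ys2 /= => ->.
Qed.

Lemma edge_position_some s1 s2 a b x0 :
  edge_position s1 s2 = Some (a, b) ->
  [/\ nth x0 s1 a \in s1, nth x0 s2 b \in s2 & e (nth x0 s1 a) (nth x0 s2 b)].
Proof.
rewrite /edge_position; case: pickP => [[x y] /and3P[/= xs1 ys2 exy] [<- <-]|//].
by rewrite !nth_index.
Qed.

Lemma uniq_map_transversal (cs : seq (seq T)) (F : seq T -> T) :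
  pairwise (fun s1 s2 => [disjoint s1 & s2]) cs -> {in cs, forall s, F s \in s} ->
  uniq (map F cs).
Proof.
elim: cs => // s cs IH; rewrite pairwise_cons => /andP[disj_s disj_cs] Fin /=.
rewrite IH // ?andbT; last by move=> s' s'cs; apply: Fin; rewrite inE s'cs orbT.
apply/mapP => -[s' s'cs eqF].
have /disjointFr := allP disj_s s' s'cs.
by move=> /(_ _ (Fin s (mem_head _ _))); rewrite eqF Fin // inE s'cs orbT.
Qed.

Lemma Ktt_of_transversals (cs1 cs2 : seq (seq T)) (F G : seq T -> T) t :
  size cs1 = t -> size cs2 = t ->
  pairwise (fun s1 s2 => [disjoint s1 & s2]) (cs1 ++ cs2) ->
  {in cs1 & cs2, forall s1 s2, [/\ F s1 \in s1, G s2 \in s2 & e (F s1) (G s2)]} ->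
  has_Ktt_subgraph e t.
Proof.
move=> size1 size2; rewrite pairwise_cat => /and3P[disj12 disj1 disj2] adj.
have Fin : {in cs1, forall s, F s \in s}.
  move=> s1 s1in; have s2in : nth [::] cs2 0 \in cs2.
    by apply: mem_nth; rewrite size2 -size1; case: (cs1) s1in.
  by have [] := adj s1 _ s1in s2in.
have Gin : {in cs2, forall s, G s \in s}.
  move=> s2 s2in; have s1in : nth [::] cs1 0 \in cs1.
    by apply: mem_nth; rewrite size1 -size2; case: (cs2) s2in.
  by have [] := adj _ s2 s1in s2in.
exists [set x in map F cs1], [set x in map G cs2]; split.
- by rewrite cardsE (card_uniqP (uniq_map_transversal disj1 Fin)) size_map.
- by rewrite cardsE (card_uniqP (uniq_map_transversal disj2 Gin)) size_map.
- apply/pred0P => x /=; rewrite !inE; apply/negP => /andP[].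
  move=> /mapP[s1 s1in ->] /mapP[s2 s2in eqFG].
  have := disjointFr (allrelP disj12 s1 s2 s1in s2in) (Fin s1 s1in).
  by rewrite eqFG Gin.
- move=> x y; rewrite !inE => /mapP[s1 s1in ->] /mapP[s2 s2in ->].
  by have [] := adj s1 s2 s1in s2in.
Qed.

Lemma independent_cycles_not_Ok_free k (cs : seq (seq T)) :
  k <= size cs -> all (is_graph_cycle e) cs ->
  pairwise (fun s1 s2 => [disjoint s1 & s2] && no_edge_between e s1 s2) cs ->
  ~ Ok_free e k.
Proof.
move=> sizecs cycles indep; apply; exists (take k cs); split.
- exact: size_takel.
- by apply/allP => s /mem_take /(allP cycles).
- exact: subseq_pairwise (take_subseq _ _) indep.
Qed.

Lemma monochromatic_positions_Ktt (x0 : T) a b t (q : seq (seq T)) :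
  t + t <= size q -> pairwise (fun s1 s2 => [disjoint s1 & s2]) q ->
  pairwise (fun s1 s2 => edge_position s1 s2 == Some (a, b)) q ->
  has_Ktt_subgraph e t.
Proof.
move=> sizeq disj hom.
apply: (@Ktt_of_transversals (take t q) (take t (drop t q))
                             (fun s => nth x0 s a) (fun s => nth x0 s b)).
- by rewrite size_takel //; lia.
- by rewrite size_takel // size_drop; lia.
- by rewrite -takeD; apply: subseq_pairwise (take_subseq _ _) disj.
- move=> s1 s2 s1in s2in; apply: edge_position_some; apply/eqP.
  move: hom; rewrite -(cat_take_drop t q) pairwise_cat => /and3P[/allrelP hom12 _ _].
  exact: hom12 s1 s2 s1in (mem_take s2in).
Qed.

End EdgePositions.

Theorem mainTheorem6 :
  exists f : nat -> nat -> nat -> nat,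
    forall l t k : nat, 1 <= l -> 1 <= t -> 1 <= k ->
    forall (T : finType) (e : rel T),
      symmetric e -> irreflexive e ->
      Ok_free e k -> ~ has_Ktt_subgraph e t ->
      forall cs : seq (seq T),
        disjoint_cycles e cs -> all (fun s => size s <= l) cs ->
        size cs <= f l t k.
Proof.
exists (fun l t k => ramsey_bound (l * l).+1 (k + (t + t))).
move=> l t k _ _ _ T e _ _ Okfree noKtt cs [cycles disj] short.
rewrite leqNgt; apply/negP => big.
have [x0 _] : exists x0 : T, true.
  by move: cycles big; case: (cs) => [|[|x0 s] ?] //=; rewrite ltn0.
have colP : {in cs &, forall s1 s2, edge_position e s1 s2 \in position_palette l}.
  by move=> s1 s2 /(allP short) sz1 /(allP short) sz2; apply: edge_position_palette.
rewrite -size_position_palette in big.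
have [c [q [subq sizeq homq]]] := ramsey_subseq colP big.
have cyclesq : all (is_graph_cycle e) q.
  by apply/allP => s /(mem_subseq subq) /(allP cycles).
have disjq := subseq_pairwise subq disj.
case: c homq => [[a b]|] homq.
  apply: noKtt (monochromatic_positions_Ktt x0 _ disjq homq).
  by rewrite sizeq leq_addl.
apply: (independent_cycles_not_Ok_free _ cyclesq) Okfree; first by rewrite sizeq leq_addr.
rewrite pairwise_relI disjq /=.
by apply: sub_pairwise homq => s1 s2 /eqP /edge_position_none.
Qed.
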